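(* For any $q\in(1,2)$, with conjugate exponent $p=q/(q-1)$, any $d$ and any $\varepsilon>0$, the $\ell_q$ mean estimation problem in $\mathbb R^d$ can be solved with error $\varepsilon$ by a statistical query algorithm using $2d\log d$ queries to $\mathrm{VSTAT}_D\big((16\log(d)/\varepsilon)^p\big)$.
   Context: For a distribution $D$ over a domain $\mathcal W$ and $n>0$, the oracle $\mathrm{VSTAT}_D(n)$, given any $\phi:\mathcal W\to[0,1]$, returns some value $v$ with $|v-p_\phi|\le\max\{1/n,\sqrt{p_\phi(1-p_\phi)/n}\}$, where $p_\phi=\mathbb E_{\mathbf w\sim D}[\phi(\mathbf w)]$; a statistical query algorithm accesses $D$ only through such calls. The $\ell_q$ mean estimation problem with error $\varepsilon$: given such oracle access to an unknown distribution $D$ supported on the unit $\ell_q$ ball $\mathcal B_q^d$, output $\tilde w\in\mathbb R^d$ with $\|\tilde w-\mathbb E_{\mathbf w\sim D}[\mathbf w]\|_q\le\varepsilon$. *)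

From mathcomp Require Import all_boot all_order all_algebra.
From mathcomp Require Import all_classical all_reals all_analysis.
Set Implicit Arguments. Unset Strict Implicit. Unset Printing Implicit Defensive.
Import Order.TTheory GRing.Theory Num.Theory.
Local Open Scope ring_scope.
Local Open Scope classical_set_scope.

Definition lqnorm {R : realType} {d : nat} (q : R) (w : 'rV[R]_d) : R :=
  (\sum_(i < d) `|w ord0 i| `^ q) `^ q^-1.

Definition conj_exp {R : realType} (q : R) : R := q / (q - 1).

Definition log2 {R : realType} (x : R) : R := ln x / ln 2.

(* A distribution D over R^d is represented as the law of a random vector
   X : T -> 'rV[R]_d on a probability space (T, P) with measurable coordinates. *)
Definition rvec_measurable {dT : measure_display} {T : measurableType dT}
  {R : realType} {d : nat} (X : T -> 'rV[R]_d) : Prop :=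
  forall i : 'I_d, measurable_fun setT (fun t => X t ord0 i).

Definition qexp {dT : measure_display} {T : measurableType dT} {R : realType}
  {d : nat} (P : probability T R) (X : T -> 'rV[R]_d) (phi : 'rV[R]_d -> R) : R :=
  fine (\int[P]_t (phi (X t))%:E)%E.

Definition mean_vec {dT : measure_display} {T : measurableType dT} {R : realType}
  {d : nat} (P : probability T R) (X : T -> 'rV[R]_d) : 'rV[R]_d :=
  \row_(i < d) fine (\int[P]_t (X t ord0 i)%:E)%E.

Definition vstat_tol {R : realType} (n p : R) : R :=
  Num.max n^-1 (Num.sqrt (p * (1 - p) / n)).

(* A query phi : R^d -> R is Borel measurable in the sense that composing it
   with any random vector with measurable coordinates gives a measurable map. *)
Definition query_measurable {R : realType} {d : nat} (phi : 'rV[R]_d -> R) : Prop :=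
  forall (dT : measure_display) (T : measurableType dT) (X : T -> 'rV[R]_d),
    rvec_measurable X -> measurable_fun setT (phi \o X).

(* A deterministic, adaptive statistical query algorithm making k queries:
   the j-th query is chosen as a function of the j previous answers, and the
   output is a function of all k answers. *)
Record SQalg (R : realType) (d : nat) := {
  sq_query : nat -> seq R -> 'rV[R]_d -> R;
  sq_output : seq R -> 'rV[R]_d }.

Definition SQalg_wf {R : realType} {d : nat} (A : SQalg R d) : Prop :=
  forall (j : nat) (s : seq R),
    (forall w, 0 <= sq_query A j s w <= 1) /\ query_measurable (sq_query A j s).

(* a is a possible sequence of answers of VSTAT_D(n) to the k queries of A
   (the oracle may answer adversarially and adaptively). *)
Definition vstat_transcript {dT : measure_display} {T : measurableType dT}
  {R : realType} {d : nat} (P : probability T R) (X : T -> 'rV[R]_d)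
  (n : R) (A : SQalg R d) (k : nat) (a : seq R) : Prop :=
  size a = k /\
  forall j : nat, (j < k)%N ->
    let p := qexp P X (sq_query A j (take j a)) in
    `|nth 0 a j - p| <= vstat_tol n p.

From mathcomp Require Import all_boot all_order all_algebra.
From mathcomp Require Import all_classical all_reals all_analysis.
From mathcomp Require Import ring lra.
Set Implicit Arguments. Unset Strict Implicit. Unset Printing Implicit Defensive.
Import Order.TTheory GRing.Theory Num.Theory.
Local Open Scope ring_scope.
Local Open Scope classical_set_scope.

(* Each coordinate w_i of a point of the unit l_q ball is split into its
   positive and negative parts, and each part into F = floor(log2 d) dyadic
   layers: layer j is the portion of the value between 2^-(j+1) and 2^-j, the
   last one everything below 2^-(F-1).  Divided by its width, a layer is a
   [0,1]-valued query, and the mean is recovered as the width-weighted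
   alternating sum of the 2dF layer expectations rho.  Answers below 2/n are
   rounded to 0; the error e of a rounded VSTAT(n) answer then satisfies
   |e| <= rho and e^2 <= 4 rho/n, hence |e|^q <= rho (4/n)^(q-1).  Since
   ||w||_q <= 1, the sum of rho over the coordinates of layer j is at most
   2^((j+1)q), which cancels the factor width^q of that layer (the last layer
   contributes at most 4).  The power-mean inequality over the 2F layers of a
   coordinate then bounds the q-th power of the l_q error by
   (8F/n)^(q-1) (F+3), which is at most eps^q for n = (16 log2 d / eps)^p. *)

Lemma ler_powR2r (R : realType) (r x y : R) : 0 <= r -> 0 <= x -> x <= y ->
  x `^ r <= y `^ r.
Proof. by move=> r0 x0 xy; rewrite ge0_ler_powR // nnegrE (le_trans x0). Qed.

Section PowerMean.
Context {R : realType} (q : R).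
Hypothesis q_ge1 : 1 <= q.

Let q_gt0 : 0 < q. Proof. exact: lt_le_trans q_ge1. Qed.

Lemma powR_conv_le (t a b : R) : 0 <= t <= 1 -> 0 <= a -> 0 <= b ->
  (t * a + (1 - t) * b) `^ q <= t * a `^ q + (1 - t) * b `^ q.
Proof.
move=> /andP[t0 t1] a0 b0.
have := @convex_powR R q q_ge1 (Itv01 t0 t1) a b.
rewrite !inE /= !in_itv /= !andbT => /(_ a0 b0).
by rewrite !convRE.
Qed.

Lemma powR_mean_le (I : Type) (s : seq I) (y : I -> R) :
  (forall k, 0 <= y k) -> (0 < size s)%N ->
  ((\sum_(k <- s) y k) / (size s)%:R) `^ q <= (\sum_(k <- s) y k `^ q) / (size s)%:R.
Proof.
move=> y0; elim: s => [//|a s IH] _.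
have [s_nil|s_gt0] := posnP (size s).
  by rewrite (size0nil s_nil) !big_seq1 !divr1.
rewrite !big_cons /= -natr1.
set m : R := (size s)%:R; set S := \sum_(k <- s) y k.
have m_gt0 : 0 < m by rewrite ltr0n.
have S0 : 0 <= S by rewrite sumr_ge0.
set t := (m + 1)^-1.
have t01 : 0 <= t <= 1 by rewrite invr_ge0 invf_le1 ?lerDr; lra.
have -> : (y a + S) / (m + 1) = t * y a + (1 - t) * (S / m).
  by rewrite /t; field; rewrite !gt_eqF //; lra.
apply: le_trans (powR_conv_le t01 (y0 a) (divr_ge0 S0 (ltW m_gt0))) _.
have t1 : 0 <= 1 - t by lra.
apply: le_trans (lerD (lexx _) (ler_wpM2l t1 (IH s_gt0))) _.
rewrite (_ : _ + _ = (y a `^ q + \sum_(k <- s) y k `^ q) * t) //.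
by rewrite /t; field; rewrite !gt_eqF //; lra.
Qed.

Lemma powR_sum_le (I : Type) (s : seq I) (y : I -> R) : (forall k, 0 <= y k) ->
  (\sum_(k <- s) y k) `^ q <= (size s)%:R `^ (q - 1) * \sum_(k <- s) y k `^ q.
Proof.
move=> y0; have [s_nil|s_gt0] := posnP (size s).
  by rewrite (size0nil s_nil) !big_nil powR0 ?mulr0 // gt_eqF.
set m : R := (size s)%:R; set S := \sum_(k <- s) y k.
have m_gt0 : 0 < m by rewrite ltr0n.
have -> : S = m * (S / m) by rewrite mulrC divfK // gt_eqF.
rewrite powRM ?(ltW m_gt0) ?divr_ge0 ?sumr_ge0 ?(ltW m_gt0) //.
rewrite -(mulr_powRB1 (ltW m_gt0) q_gt0) -mulrA mulrCA ler_wpM2l ?powR_ge0 //.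
by rewrite mulrC -ler_pdivlMr // powR_mean_le.
Qed.

Lemma powR_norm_sum_le (I : Type) (s : seq I) (x : I -> R) :
  `|\sum_(k <- s) x k| `^ q <= (size s)%:R `^ (q - 1) * \sum_(k <- s) `|x k| `^ q.
Proof.
apply: le_trans (powR_sum_le s (fun k => normr_ge0 (x k))).
by rewrite ler_powR2r ?(ltW q_gt0) ?ler_norm_sum.
Qed.

End PowerMean.

Lemma powRK (R : realType) (r x : R) : r != 0 -> 0 <= x -> (x `^ r) `^ r^-1 = x.
Proof. by move=> r0 x0; rewrite -powRrM mulfV // powRr1. Qed.

Lemma powRVK (R : realType) (r x : R) : r != 0 -> 0 <= x -> (x `^ r^-1) `^ r = x.
Proof. by move=> r0 x0; rewrite -powRrM mulVf // powRr1. Qed.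

Lemma powR_interp_le (R : realType) (q e a b : R) : 1 <= q <= 2 ->
  0 <= e -> e <= a -> e ^+ 2 <= a * b -> e `^ q <= a * b `^ (q - 1).
Proof.
move=> /andP[q1 q2] e0 ea eab.
have [a0|a_neq0] := eqVneq a 0.
  have -> : e = 0 by apply/le_anti; rewrite e0 -a0 ea.
  by rewrite a0 mul0r powR0 // gt_eqF //; lra.
have a_gt0 : 0 < a by rewrite lt_neqAle eq_sym a_neq0 (le_trans e0).
have b0 : 0 <= b by rewrite -(pmulr_rge0 _ a_gt0) (le_trans (sqr_ge0 e)).
have q_split : (2 - q) + 2 * (q - 1) = q by ring.
rewrite -{1}q_split (@powRD _ e); last by rewrite q_split gt_eqF //; lra.
rewrite powRrM -[2]/(2%:R) powR_mulrn //.
have -> : a * b `^ (q - 1) = a `^ (2 - q) * (a * b) `^ (q - 1).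
  rewrite powRM ?(ltW a_gt0) // mulrA -(@powRD _ a) ?(gt_eqF a_gt0) ?implybT //.
  by rewrite (_ : 2 - q + (q - 1) = 1) ?powRr1 ?(ltW a_gt0) //; ring.
by apply: ler_pM; rewrite ?powR_ge0 //; apply: ler_powR2r; rewrite ?sqr_ge0 //; lra.
Qed.

Section LqNorm.
Context {R : realType} {d : nat} (q : R).
Hypothesis q_gt0 : 0 < q.
Implicit Types w : 'rV[R]_d.

Let q_neq0 : q != 0. Proof. by rewrite gt_eqF. Qed.

Lemma lqnorm_le w e : 0 <= e ->
  (lqnorm q w <= e) = (\sum_(i < d) `|w ord0 i| `^ q <= e `^ q).
Proof.
move=> e0; have S0 : 0 <= \sum_(i < d) `|w ord0 i| `^ q by rewrite sumr_ge0.
rewrite /lqnorm; apply/idP/idP => h.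
  by rewrite -(powRVK q_neq0 S0) (ler_powR2r (ltW q_gt0) (powR_ge0 _ _) h).
rewrite -[X in _ <= X](powRK q_neq0 e0).
by rewrite ler_powR2r // invr_ge0 ltW.
Qed.

Lemma normr_coord_le_lqnorm w i : `|w ord0 i| <= lqnorm q w.
Proof.
rewrite -(powRK q_neq0 (normr_ge0 _)).
rewrite ler_powR2r ?powR_ge0 ?invr_ge0 ?(ltW q_gt0) //.
by rewrite (bigD1 i) //= lerDl sumr_ge0.
Qed.

End LqNorm.

Lemma integrable_sumR {dT : measure_display} {T : measurableType dT} {R : realType}
    (mu : {measure set T -> \bar R}) (D : set T) (I : Type) (s : seq I) (f : I -> T -> R) :
  measurable D -> (forall k, mu.-integrable D (EFin \o f k)) ->
  mu.-integrable D (EFin \o (fun x => \sum_(k <- s) f k x)).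
Proof.
move=> mD intf; have -> : EFin \o (fun x => \sum_(k <- s) f k x) =
    (fun x => \sum_(k <- s) (EFin \o f k) x)%E.
  by apply: funext => x /=; rewrite sumEFin.
exact: integrable_sum.
Qed.

Lemma Rintegral_sum {dT : measure_display} {T : measurableType dT} {R : realType}
    (mu : {measure set T -> \bar R}) (D : set T) (I : Type) (s : seq I) (f : I -> T -> R) :
  measurable D -> (forall k, mu.-integrable D (EFin \o f k)) ->
  \int[mu]_(x in D) (\sum_(k <- s) f k x) = \sum_(k <- s) \int[mu]_(x in D) f k x.
Proof.
move=> mD intf; rewrite /Rintegral sum_fine => [|k _].
  by rewrite -(integral_sum mD intf); under eq_integral do rewrite -sumEFin.
exact: integrable_fin_num (intf k).
Qed.

Lemma integrable_query {dT : measure_display} {T : measurableType dT} {R : realType}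
    (P : probability T R) {d : nat} (X : T -> 'rV[R]_d) (phi : 'rV[R]_d -> R) (M : R) :
  rvec_measurable X -> query_measurable phi -> (forall w, `|phi w| <= M) ->
  P.-integrable setT (EFin \o (phi \o X)).
Proof.
move=> mX mphi phiM; apply: measurable_bounded_integrable => //.
- by rewrite (le_lt_trans (probability_le1 P measurableT)) ?ltry.
- exact: mphi.
exists M; split; first by rewrite num_real.
by move=> M' MM' t _ /=; rewrite (le_trans (phiM _)) ?ltW.
Qed.

Lemma Rintegral_lincomb {dT : measure_display} {T : measurableType dT} {R : realType}
    (mu : {measure set T -> \bar R}) (D : set T) (I : Type) (s : seq I)
    (c : I -> R) (f : I -> T -> R) :
  measurable D -> (forall k, mu.-integrable D (EFin \o f k)) ->
  \int[mu]_(x in D) (\sum_(k <- s) c k * f k x) = \sum_(k <- s) c k * \int[mu]_(x in D) f k x.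
Proof.
move=> mD intf.
have intcf k : mu.-integrable D (EFin \o (fun x => c k * f k x)).
  have -> : EFin \o (fun x => c k * f k x) = (fun x => (c k)%:E * (EFin \o f k) x)%E.
    by apply: funext => x /=; rewrite EFinM.
  exact: integrableZl.
by rewrite Rintegral_sum //; apply: eq_bigr => k _; rewrite RintegralZl.
Qed.

Lemma size_index_enum (T : finType) : size (index_enum T) = #|T|.
Proof. by rewrite cardT enumT [index_enum T]unlock. Qed.

Section Nonadaptive.
Context {R : realType} {d : nat} (K : finType).
Variables (Q : K -> 'rV[R]_d -> R) (out : (K -> R) -> 'rV[R]_d).

Definition nonadaptive_alg : SQalg R d := {|
  sq_query := fun m _ =>
    if insub m : option 'I_#|K| is Some k then Q (enum_val k) else fun=> 0;
  sq_output := fun a => out (fun k => nth 0 a (enum_rank k)) |}.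

Lemma nonadaptive_alg_wf : (forall k w, 0 <= Q k w <= 1) ->
  (forall k, query_measurable (Q k)) -> SQalg_wf nonadaptive_alg.
Proof.
move=> Q01 mQ m s /=; case: insubP => [k _ _|_]; first by split; [exact: Q01 | exact: mQ].
by split=> [w|dT T X _]; [rewrite lexx ler01 | exact: measurable_cst].
Qed.

Lemma nonadaptive_alg_answers {dT : measure_display} {T : measurableType dT}
    (P : probability T R) (X : T -> 'rV[R]_d) (n : R) (a : seq R) :
  vstat_transcript P X n nonadaptive_alg #|K| a ->
  forall k, `|nth 0 a (enum_rank k) - qexp P X (Q k)| <= vstat_tol n (qexp P X (Q k)).
Proof. by move=> [_ ans] k; have := ans _ (ltn_ord (enum_rank k)); rewrite /= valK enum_rankK. Qed.

End Nonadaptive.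

Lemma natr_trunc_log2_le (R : realType) (d : nat) : (0 < d)%N ->
  (trunc_log 2 d)%:R <= log2 (d%:R : R).
Proof.
move=> d_gt0; have ln2_gt0 : (0 : R) < ln 2 by rewrite ln_gt0 // ltr1n.
rewrite /log2 ler_pdivlMr // mulrC mulr_natr -lnXn ?ltr0n // ler_ln ?posrE ?exprn_gt0 ?ltr0n //.
by rewrite -natrX ler_nat trunc_logP.
Qed.

Definition threshold_est (R : realType) (n v : R) : R := if 2 / n <= v then v else 0.

Lemma threshold_est_err (R : realType) (n rho v : R) : 0 < n -> 0 <= rho ->
  `|v - rho| <= n^-1 \/ (v - rho) ^+ 2 <= rho / n ->
  `|threshold_est n v - rho| <= rho /\ (threshold_est n v - rho) ^+ 2 <= 4 * rho / n.
Proof.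
move=> n_gt0 rho0 hv; have nu_gt0 : 0 < n^-1 by rewrite invr_gt0.
rewrite /threshold_est ler_norml -mulrA; set nu := n^-1 in hv nu_gt0 *.
case: ifP => [v_big|/negbT]; last rewrite -ltNge => v_small.
  by case: hv; rewrite ?ler_norml => hv; nra.
have rho_le : rho <= 4 * nu.
  rewrite leNgt; apply/negP => rho_big.
  case: hv; rewrite ?ler_norml => hv; first lra.
  have : (rho - 2 * nu) ^+ 2 <= (rho - v) ^+ 2 by rewrite ler_sqr ?nnegrE; lra.
  nra.
rewrite sub0r sqrrN expr2; split; first lra.
by rewrite mulrCA ler_wpM2l.
Qed.

Lemma vstat_tol_cases (R : realType) (n rho v : R) : 0 < n -> 0 <= rho ->
  `|v - rho| <= vstat_tol n rho -> `|v - rho| <= n^-1 \/ (v - rho) ^+ 2 <= rho / n.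
Proof.
move=> n_gt0 rho0; rewrite /vstat_tol le_max => /orP[|tol_sqrt]; [by left | right].
rewrite -real_normK ?num_real //.
apply: le_trans (_ : Num.sqrt (rho * (1 - rho) / n) ^+ 2 <= _).
  by rewrite ler_sqr ?nnegrE ?sqrtr_ge0.
have [var0|var_lt0] := leP 0 (rho * (1 - rho) / n).
  by rewrite sqr_sqrtr //; apply: ler_wpM2r; rewrite ?invr_ge0 ?(ltW n_gt0) //; nra.
by rewrite ltr0_sqrtr // expr0n divr_ge0 // ltW.
Qed.

Lemma threshold_est_err_powR (R : realType) (q n rho v : R) : 1 <= q <= 2 ->
  0 < n -> 0 <= rho -> `|v - rho| <= vstat_tol n rho ->
  `|threshold_est n v - rho| `^ q <= rho * (4 / n) `^ (q - 1).
Proof.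
move=> q12 n_gt0 rho0 /(vstat_tol_cases n_gt0 rho0) /(threshold_est_err n_gt0 rho0).
move=> [e_le e_sqr]; apply: powR_interp_le; rewrite ?real_normK ?num_real //; lra.
Qed.

Section Clamp.
Context {R : realType}.
Implicit Types t x : R.

Definition clamp t x : R := Num.min (Num.max x 0) t.

Lemma clamp_ge0 t x : 0 <= t -> 0 <= clamp t x.
Proof. by move=> t0; rewrite /clamp le_min le_max lexx orbT. Qed.

Lemma clamp_le t x : clamp t x <= t.
Proof. by rewrite /clamp ge_min lexx orbT. Qed.

Lemma clamp_nonpos t x : 0 <= t -> x <= 0 -> clamp t x = 0.
Proof. by move=> t0 x0; rewrite /clamp max_r // min_l. Qed.

Lemma clamp_below t t' x : 0 <= t' <= t -> x <= t' -> clamp t x = clamp t' x.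
Proof.
move=> /andP[t'0 t't] xt'; have m : Num.max x 0 <= t' by rewrite ge_max xt'.
by rewrite /clamp !min_l // (le_trans m).
Qed.

Lemma clamp_diff t t' x : t' <= t -> 0 <= clamp t x - clamp t' x <= t - t'.
Proof.
by rewrite /clamp => t't; case: (leP (Num.max x 0) t'); case: (leP (Num.max x 0) t); lra.
Qed.

End Clamp.

Lemma clamp_sub_clampN (R : realType) (t x : R) : `|x| <= t -> clamp t x - clamp t (- x) = x.
Proof.
rewrite ler_norml /clamp => /andP[xt tx].
case: (leP x 0) => x0.
  by rewrite max_l ?min_l; lra.
by rewrite max_r ?min_l; lra.
Qed.

Section Layers.
Context {R : realType} (F : nat).

Definition level j : R := 2^-1 ^+ j.

Definition cut (x : R) j := if (j < F)%N then clamp (level j) x else 0.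

Definition slice x j := cut x j - cut x j.+1.

Definition width j := if (j.+1 < F)%N then level j.+1 else level j.

Lemma level_gt0 j : 0 < level j.
Proof. by rewrite exprn_gt0 // invr_gt0. Qed.

Lemma level_le1 j : level j <= 1.
Proof. by rewrite exprn_ile1 // ?invr_ge0 // invf_le1 ?ler1n. Qed.

Lemma levelS j : level j.+1 = level j / 2.
Proof. by rewrite /level exprS mulrC. Qed.

Lemma width_gt0 j : 0 < width j.
Proof. by rewrite /width; case: ifP => _; exact: level_gt0. Qed.

Lemma slice_bounds x j : 0 <= slice x j <= width j.
Proof.
have l0 := level_gt0 j; have lS := levelS j.
rewrite /slice /cut /width; case: (ltnP j.+1 F) => hj1.
  rewrite (ltnW hj1); have := @clamp_diff R (level j) (level j.+1) x; lra.
rewrite subr0; case: ifP => _; last by rewrite lexx ltW.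
by rewrite clamp_ge0 ?clamp_le ?ltW.
Qed.

Lemma slice_nonpos x j : x <= 0 -> slice x j = 0.
Proof.
move=> x0; have l0 k : 0 <= level k by exact/ltW/level_gt0.
by rewrite /slice /cut; case: ifP => _; case: ifP => _; rewrite ?clamp_nonpos ?subrr.
Qed.

Lemma slice_small x j : (j.+1 < F)%N -> x <= level j.+1 -> slice x j = 0.
Proof.
move=> hj1 x_small; rewrite /slice /cut hj1 (ltnW hj1).
have lS := levelS j; have l0 := level_gt0 j.+1.
by rewrite (@clamp_below _ _ (level j.+1)) ?subrr //; lra.
Qed.

Lemma sum_slice x : (0 < F)%N -> \sum_(j < F) slice x j = clamp 1 x.
Proof.
move=> F_gt0; rewrite -(big_mkord xpredT (slice x)).
rewrite (telescope_sumr_eq (fun j => - cut x j)) => [|//|k _]; last first.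
  by rewrite /slice opprK addrC.
by rewrite /cut ltnn F_gt0 /level expr0 oppr0 sub0r opprK.
Qed.

End Layers.

Section Queries.
Context {R : realType} (F d : nat).
Implicit Types w : 'rV[R]_d.

Definition layer_query (i : 'I_d) (j : nat) (s : bool) (w : 'rV[R]_d) : R :=
  slice F ((-1) ^+ s * w ord0 i) j / width F j.

Definition layer_weight (q : R) j : R :=
  if (j.+1 < F)%N then (@level R j.+1)^-1 `^ q else d%:R.

Lemma layer_query_bounds i j s w : 0 <= layer_query i j s w <= 1.
Proof.
have /andP[sl0 slw] := slice_bounds F ((-1) ^+ s * w ord0 i) j.
have wd0 := @width_gt0 R F j.
by rewrite /layer_query divr_ge0 ?(ltW wd0) //= ler_pdivrMr // mul1r.
Qed.

Lemma layer_query_recon i w : (0 < F)%N -> `|w ord0 i| <= 1 ->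
  \sum_(j < F) \sum_(s : bool) (-1) ^+ s * width F j * layer_query i j s w = w ord0 i.
Proof.
move=> F_gt0 wi1.
have wQ j s : width F j * layer_query i j s w = slice F ((-1) ^+ s * w ord0 i) j.
  by rewrite /layer_query mulrC divfK // gt_eqF ?width_gt0.
under eq_bigr => j _ do rewrite big_bool /= -!mulrA !wQ mulN1r mul1r addrC.
by rewrite sumrB !sum_slice // mulN1r mul1r clamp_sub_clampN.
Qed.

Lemma layer_query_pair_le1 i j w : \sum_(s : bool) layer_query i j s w <= 1.
Proof.
have Q0 (s : bool) : (-1) ^+ s * w ord0 i <= 0 -> layer_query i j s w = 0.
  by move=> h; rewrite /layer_query slice_nonpos // mul0r.
rewrite big_bool /=; have [wi0|wi0] := leP (w ord0 i) 0.
  rewrite (Q0 false) ?expr0 ?mul1r // addr0.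
  by case/andP: (layer_query_bounds i j true w).
rewrite (Q0 true) ?expr1 ?mulN1r ?oppr_le0 ?(ltW wi0) // add0r.
by case/andP: (layer_query_bounds i j false w).
Qed.

Lemma layer_query_pair_small i j w : (j.+1 < F)%N -> `|w ord0 i| <= @level R j.+1 ->
  \sum_(s : bool) layer_query i j s w = 0.
Proof.
move=> hj1; rewrite ler_norml => /andP[wl lw].
rewrite big_bool /= /layer_query mul1r mulN1r !slice_small ?mul0r ?addr0 //.
by rewrite lerNl.
Qed.

Lemma layer_query_pair_le_powR (q : R) i j w : 0 <= q -> (j.+1 < F)%N ->
  \sum_(s : bool) layer_query i j s w <= (`|w ord0 i| / @level R j.+1) `^ q.
Proof.
move=> q0 hj1; have l0 := @level_gt0 R j.+1.
have [small|big] := leP `|w ord0 i| (@level R j.+1).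
  by rewrite layer_query_pair_small ?powR_ge0.
apply: le_trans (layer_query_pair_le1 i j w) _.
rewrite -(powRr0 (`|w ord0 i| / @level R j.+1)) ler_powR //.
by rewrite ler_pdivlMr // mul1r ltW.
Qed.

Lemma sum_layer_query_le (q : R) j w : 0 <= q -> \sum_(i < d) `|w ord0 i| `^ q <= 1 ->
  \sum_(i < d) \sum_(s : bool) layer_query i j s w <= layer_weight q j.
Proof.
move=> q0 w_le1; rewrite /layer_weight; case: ifP => hj1; last first.
  rewrite -[X in _ <= X%:R]card_ord -sumr_const; apply: ler_sum => i _.
  exact: layer_query_pair_le1.
have linv0 : 0 <= (@level R j.+1)^-1 by rewrite invr_ge0 ltW ?level_gt0.
apply: le_trans (ler_sum _ (fun i _ => layer_query_pair_le_powR i w q0 hj1)) _.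
under eq_bigr => i _ do rewrite powRM //.
by rewrite -mulr_suml ler_piMl ?powR_ge0.
Qed.

Lemma sum_width_weight (q : R) : 1 <= q -> (0 < F)%N -> (d < 2 ^ F.+1)%N ->
  \sum_(j < F) width F j `^ q * layer_weight q j <= F%:R + 3.
Proof.
move=> q1 F_gt0 d_lt.
rewrite -(big_mkord xpredT (fun j => width F j `^ q * layer_weight q j)).
have eF : (F%:R : R) = F.-1%:R + 1 by rewrite natr1 prednK.
rewrite -{1}(prednK F_gt0) big_nat_recr //= eF -addrA.
apply: lerD.
  rewrite (eq_big_nat _ _ (F2 := fun=> 1)) ?sumr_const_nat ?subn0 //.
  move=> j /andP[_ hj]; have hj1 : (j.+1 < F)%N by rewrite -ltn_predRL.
  have l0 := @level_gt0 R j.+1.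
  by rewrite /width /layer_weight hj1 -powRM ?mulfV ?powR1 ?gt_eqF ?invr_ge0 ?ltW.
rewrite /width /layer_weight prednK // ltnn.
have l0 := @level_gt0 R F.-1; have l1 := @level_le1 R F.-1.
apply: le_trans (_ : level F.-1 * d%:R <= _).
  by rewrite ler_wpM2r // ge1r_powR // l0.
have : (d%:R : R) <= 2 ^+ F.-1 * 4.
  by rewrite -(natrX _ 2) -natrM ler_nat -[4%N]/(2 ^ 2)%N -expnD addn2 prednK // ltnW.
rewrite /level exprVn -ler_pdivrMl ?exprn_gt0 //; lra.
Qed.

End Queries.

Lemma layer_query_measurable {R : realType} (F d : nat) (i : 'I_d) j s :
  query_measurable (@layer_query R F d i j s).
Proof.
move=> dT T X mX.
have mx : measurable_fun setT (fun t => (-1) ^+ s * X t ord0 i).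
  exact: measurable_realfun.measurable_funM (measurable_cst _) (mX i).
have mcut k : measurable_fun setT (fun t => cut F ((-1) ^+ s * X t ord0 i) k).
  rewrite /cut; case: (k < F)%N; last exact: measurable_cst.
  apply: measurable_realfun.measurable_minr (measurable_cst _).
  exact: measurable_realfun.measurable_maxr mx (measurable_cst _).
apply: measurable_realfun.measurable_funM (measurable_cst _).
exact: measurable_realfun.measurable_funB.
Qed.

Section LayerMoments.
Context {dT : measure_display} {T : measurableType dT} {R : realType}
  (P : probability T R) {d : nat} (X : T -> 'rV[R]_d) (F : nat) (q : R).
Hypotheses (mX : rvec_measurable X) (q_gt0 : 0 < q).
Hypothesis X_le1 : forall t, lqnorm q (X t) <= 1.

Let integrable_layer_query i j s :
  P.-integrable setT (EFin \o (layer_query F i j s \o X)).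
Proof.
apply: (integrable_query P mX (layer_query_measurable F i j s) (M := 1)) => w.
by have /andP[Q0 Q1] := layer_query_bounds F i j s w; rewrite ger0_norm.
Qed.

Lemma qexp_layer_query_ge0 i j s : 0 <= qexp P X (layer_query F i j s).
Proof.
by apply: Rintegral_ge0 => t _; case/andP: (layer_query_bounds F i j s (X t)).
Qed.

Lemma mean_vec_layers i : (0 < F)%N ->
  mean_vec P X ord0 i =
  \sum_(j < F) \sum_(s : bool) (-1) ^+ s * width F j * qexp P X (layer_query F i j s).
Proof.
move=> F_gt0; rewrite /mean_vec mxE.
transitivity (\int[P]_t (\sum_(j < F) \sum_(s : bool)
    (-1) ^+ s * width F j * layer_query F i j s (X t))).
  apply: eq_Rintegral => t _; rewrite layer_query_recon //.
  exact: le_trans (normr_coord_le_lqnorm q_gt0 _ _) (X_le1 t).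
under eq_Rintegral do rewrite pair_bigA.
rewrite pair_bigA Rintegral_lincomb //= => -[j s].
exact: integrable_layer_query.
Qed.

Lemma sum_qexp_layer_query_le j :
  \sum_(i < d) \sum_(s : bool) qexp P X (layer_query F i j s) <= layer_weight F d q j.
Proof.
have intQ (p : 'I_d * bool) : P.-integrable setT (EFin \o (layer_query F p.1 j p.2 \o X)).
  exact: integrable_layer_query.
rewrite pair_bigA -Rintegral_sum //.
apply: le_trans (_ : \int[P]_t layer_weight F d q j <= _).
  apply: le_Rintegral => //; first exact: integrable_sumR.
    exact: finite_measure_integrable_cst.
  move=> t _; rewrite -(pair_bigA _ (fun (i : 'I_d) (s : bool) => layer_query F i j s (X t))).
  apply: sum_layer_query_le; first exact: ltW.
  by have := X_le1 t; rewrite lqnorm_le // powR1.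
have P1 : fine (P setT) = 1 :> R by rewrite probability_setT.
by rewrite Rintegral_cst // P1 mulr1.
Qed.

End LayerMoments.

Section Aggregation.
Context {R : realType} (q n : R) (F d : nat).
Hypotheses (q_ge1 : 1 <= q) (q_le2 : q <= 2) (n_gt0 : 0 < n).

Lemma layered_err_coord (rho v : 'I_F -> bool -> R) :
  (forall j s, 0 <= rho j s) ->
  (forall j s, `|v j s - rho j s| <= vstat_tol n (rho j s)) ->
  `|\sum_(j < F) \sum_(s : bool) (-1) ^+ s * width F j * (threshold_est n (v j s) - rho j s)|
    `^ q <= (2 * F%:R) `^ (q - 1) * (4 / n) `^ (q - 1) *
           \sum_(j < F) width F j `^ q * \sum_(s : bool) rho j s.
Proof.
move=> rho0 v_rho; rewrite pair_bigA.
apply: le_trans (powR_norm_sum_le q_ge1 _ _) _.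
rewrite size_index_enum card_prod card_ord card_bool natrM (mulrC F%:R) -mulrA.
rewrite ler_wpM2l ?powR_ge0 //.
rewrite -(pair_bigA _ (fun (j : 'I_F) (s : bool) =>
  `|(-1) ^+ s * width F j * (threshold_est n (v j s) - rho j s)| `^ q)) /=.
rewrite mulr_sumr; apply: ler_sum => j _; rewrite mulrCA !mulr_sumr; apply: ler_sum => s _.
have w0 := ltW (@width_gt0 R F j).
set e := threshold_est n (v j s) - rho j s.
have -> : `|(-1) ^+ s * width F j * e| `^ q = width F j `^ q * `|e| `^ q.
  by rewrite !normrM normrX normrN1 expr1n mul1r (ger0_norm w0) powRM.
rewrite ler_wpM2l ?powR_ge0 // mulrC; apply: threshold_est_err_powR => //.
by rewrite q_ge1.
Qed.

Lemma layered_err (rho v : 'I_d -> 'I_F -> bool -> R) :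
  (0 < F)%N -> (d < 2 ^ F.+1)%N ->
  (forall i j s, 0 <= rho i j s) ->
  (forall i j s, `|v i j s - rho i j s| <= vstat_tol n (rho i j s)) ->
  (forall j : 'I_F, \sum_(i < d) \sum_(s : bool) rho i j s <= layer_weight F d q j) ->
  \sum_(i < d) `|\sum_(j < F) \sum_(s : bool)
      (-1) ^+ s * width F j * (threshold_est n (v i j s) - rho i j s)| `^ q
    <= (8 * F%:R / n) `^ (q - 1) * (F%:R + 3).
Proof.
move=> F_gt0 d_lt rho0 v_rho rho_weight.
apply: le_trans (ler_sum _ (fun i _ => layered_err_coord (rho0 i) (v_rho i))) _.
have -> : (8 * F%:R / n) `^ (q - 1) = (2 * F%:R) `^ (q - 1) * (4 / n) `^ (q - 1).
  rewrite -powRM ?mulr_ge0 ?divr_ge0 ?invr_ge0 ?(ltW n_gt0) //.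
  by rewrite (_ : 8 * F%:R / n = 2 * F%:R * (4 / n)) //; ring.
rewrite -mulr_sumr ler_wpM2l ?mulr_ge0 ?powR_ge0 //.
rewrite exchange_big /=; apply: le_trans (sum_width_weight q_ge1 F_gt0 d_lt).
by apply: ler_sum => j _; rewrite -mulr_sumr ler_wpM2l ?powR_ge0 ?rho_weight.
Qed.

End Aggregation.

Lemma vstat_param_bound (R : realType) (q eps L : R) (F : nat) :
  1 < q -> 0 < eps -> 1 <= L -> F%:R <= L ->
  (8 * F%:R / (16 * L / eps) `^ conj_exp q) `^ (q - 1) * (F%:R + 3) <= eps `^ q.
Proof.
move=> q1 eps_gt0 L1 FL.
have q_gt0 : 0 < q by apply: lt_trans q1.
set x := 16 * L / eps.
have x_gt0 : 0 < x by rewrite divr_gt0 // mulr_gt0 //; lra.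
(* the conjugate exponent enters only here, through p (q - 1) = q *)
have n_pow : ((x `^ conj_exp q)^-1) `^ (q - 1) = (x `^ q)^-1.
  rewrite -powRN -powRrM mulNr /conj_exp divfK ?powRN // subr_eq0 gt_eqF //.
have eps_x : eps `^ q = (16 * L) `^ q / x `^ q.
  have -> : 16 * L = x * eps by rewrite /x divfK // gt_eqF.
  rewrite powRM ?(ltW x_gt0) ?(ltW eps_gt0) //; field.
  by rewrite gt_eqF ?powR_gt0.
rewrite eps_x (@powRM _ (8 * F%:R)) ?mulr_ge0 ?invr_ge0 ?powR_ge0 //.
rewrite n_pow mulrAC ler_pM2r ?invr_gt0 ?powR_gt0 //.
have q1_ge0 : 0 <= q - 1 by lra.
apply: le_trans (_ : (16 * L) `^ (q - 1) * (16 * L) <= _).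
  by apply: ler_pM; rewrite ?powR_ge0 ?ler_powR2r //; lra.
by rewrite mulrC mulr_powRB1 //; lra.
Qed.

Definition layer_alg (R : realType) (d F : nat) (n : R) : SQalg R d :=
  nonadaptive_alg (fun k : 'I_d * 'I_F * bool => layer_query F k.1.1 k.1.2 k.2)
    (fun ans => \row_i \sum_(j < F) \sum_(s : bool)
       (-1) ^+ s * width F j * threshold_est n (ans (i, j, s))).

Lemma layer_alg_error {dT : measure_display} {T : measurableType dT} {R : realType}
    (P : probability T R) {d : nat} (X : T -> 'rV[R]_d) (F : nat) (q n : R) (a : seq R) :
  rvec_measurable X -> 0 < q -> (forall t, lqnorm q (X t) <= 1) -> (0 < F)%N ->
  forall i, (sq_output (layer_alg d F n) a - mean_vec P X) ord0 i =
    \sum_(j < F) \sum_(s : bool) (-1) ^+ s * width F j *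
      (threshold_est n (nth 0 a (enum_rank (i, j, s))) - qexp P X (layer_query F i j s)).
Proof.
move=> mX q_gt0 X_le1 F_gt0 i.
have := mean_vec_layers P mX q_gt0 X_le1 i F_gt0; rewrite !mxE => ->; rewrite -sumrB.
by apply: eq_bigr => j _; rewrite -sumrB; apply: eq_bigr => s _; rewrite mulrBr.
Qed.

Theorem theorem3p15 (R : realType) (q : R) (d : nat) (eps : R) :
  1 < q -> q < 2 -> (2 <= d)%N -> 0 < eps ->
  exists (k : nat) (A : SQalg R d),
    k%:R <= 2 * d%:R * log2 (d%:R : R) /\
    SQalg_wf A /\
    forall (dT : measure_display) (T : measurableType dT)
           (P : probability T R) (X : T -> 'rV[R]_d),
      rvec_measurable X ->
      (forall t, lqnorm q (X t) <= 1) ->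
      forall a : seq R,
        vstat_transcript P X ((16 * log2 (d%:R : R) / eps) `^ (conj_exp q)) A k a ->
        lqnorm q (sq_output A a - mean_vec P X) <= eps.
Proof.
move=> q1 q2 d2 eps_gt0; have q_gt0 : 0 < q by apply: lt_trans q1.
set F := trunc_log 2 d; set L := log2 (d%:R : R).
have F_gt0 : (0 < F)%N by rewrite trunc_log_gt0.
have d_lt : (d < 2 ^ F.+1)%N by rewrite trunc_log_ltn.
have FL : F%:R <= L by rewrite natr_trunc_log2_le // ltnW.
have L1 : 1 <= L by rewrite (le_trans _ FL) // ler1n.
set n := (16 * L / eps) `^ conj_exp q.
have n_gt0 : 0 < n by rewrite powR_gt0 // divr_gt0 // mulr_gt0 //; lra.
exists #|{: 'I_d * 'I_F * bool}|, (layer_alg d F n); split; [|split].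
- rewrite !card_prod !card_ord card_bool !natrM [X in X <= _]mulrC mulrA.
  by apply: ler_wpM2l; rewrite ?mulr_ge0.
- apply: nonadaptive_alg_wf => [k w|k].
    exact: layer_query_bounds.
  exact: layer_query_measurable.
move=> dT T P X mX X_le1 a /nonadaptive_alg_answers ans.
rewrite lqnorm_le ?(ltW eps_gt0) //.
under eq_bigr do rewrite (layer_alg_error P n a mX q_gt0 X_le1 F_gt0).
apply: le_trans _ (vstat_param_bound q1 eps_gt0 L1 FL).
apply: (layered_err (ltW q1) (ltW q2) n_gt0 F_gt0 d_lt).
- by move=> i j s; exact: qexp_layer_query_ge0.
- by move=> i j s; exact: ans (i, j, s).
- by move=> j; exact: sum_qexp_layer_query_le.
Qed.
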